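(* Let $G$ be a connected $3$-regular multigraph, possibly with loops, embedded on a sphere $\Sigma$. If a noose $\gamma$ with respect to $G$ is $\frac{2}{3}$-edge-balanced, then it is also $\frac{2}{3}$-face-balanced.
   Context: A loop contributes $2$ to the degree of its vertex. A noose with respect to $G$ is a directed closed curve on $\Sigma$ that intersects the embedding of $G$ only in vertices of $G$, visits at least one vertex, and visits every face of $G$ at most once. It splits $\Sigma$ into the enclosed open disk (to its right) and the excluded open disk (to its left). $\mathrm{enc}(\gamma,G)$ (resp. $\mathrm{exc}(\gamma,G)$) consists of the vertices and edges of $G$ embedded in the closure of the enclosed (resp. excluded) disk. $\gamma$ is $\alpha$-edge-balanced if $|E(\mathrm{enc}(\gamma,G))|\le\alpha|E(G)|$ and $|E(\mathrm{exc}(\gamma,G))|\le\alpha|E(G)|$. $\gamma$ is $\alpha$-face-balanced if the number of faces of $G$ contained in the enclosed disk (strictly enclosed faces) and the number of faces of $G$ contained in the excluded disk (strictly excluded faces) are each at most $\alpha|F(G)|$, where $F(G)$ is the set of faces of $G$; faces traversed by $\gamma$ count for neither. *)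

From mathcomp Require Import all_boot all_order all_algebra all_fingroup.
Set Implicit Arguments. Unset Strict Implicit. Unset Printing Implicit Defensive.
Import Order.TTheory GRing.Theory Num.Theory.

Section Maps.
Variable D : finType.  (* darts = half-edges *)
(* s : rotation of the darts around their vertex (vertices = s-orbits);
   a : edge involution (edges = a-orbits, loops allowed: both darts of an
   edge may lie in the same s-orbit, so a loop contributes 2 to the degree). *)
Variables s a : {perm D}.

Definition phi (d : D) : D := s (a d).

(* A corner is named by a dart x : it is the angle between x and s x at the
   vertex of x; it lies in the face (phi-orbit) of s x. *)

Definition multigraph_map : Prop :=
  (forall d, a (a d) = d) /\ (forall d, a d != d).

Definition n_vertices := fcard s D.
Definition n_edges := fcard a D.
Definition n_faces := fcard phi D.

Definition cubic : Prop := forall d, fingraph.order s d = 3.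

Definition connected_map : Prop :=
  forall x y, connect (fun u v => (v == s u) || (v == a u)) x y.

(* the (connected, orientable) rotation system is an embedding on the
   sphere: genus 0, i.e. Euler's formula V - E + F = 2 *)
Definition spherical : Prop := (n_vertices + n_faces = n_edges + 2)%N.

(* A noose visiting k.+1 vertices: at its i-th vertex it enters through
   corner (A i) and leaves through corner (B i) (both at that vertex); it
   then runs inside the face of corner (B i) to the corner A (i+1 mod k.+1). *)
Definition noose k (A B : 'I_k.+1 -> D) : Prop :=
  [/\ forall i, fconnect s (A i) (B i),
      forall i j, i != j -> ~~ fconnect s (A i) (A j),
      forall i, fconnect phi (s (B i)) (s (A (ordS i))) &
      forall i j, i != j -> ~~ fconnect phi (s (B i)) (s (B j))].

Definition on_noose k (A : 'I_k.+1 -> D) (d : D) : bool :=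
  [exists i, fconnect s (A i) d].

(* lab : D -> bool is the side of the noose on which each dart (hence each
   edge) lies: true = enclosed side, false = excluded side.  At a visited
   vertex the darts s(A i), s^2(A i), ..., B i (going around the rotation
   from the entry corner to the exit corner) are on the enclosed side, the
   others on the excluded side; the two darts of an edge are on the same
   side (edges do not meet the curve); and at a non-visited vertex all darts
   are on the same side. *)
Definition noose_sides k (A B : 'I_k.+1 -> D) (lab : pred D) : Prop :=
  [/\ forall d, lab (a d) = lab d,
      forall d, ~~ on_noose A d -> lab (s d) = lab d &
      forall i d, fconnect s (A i) d ->
        lab d = (findex s (s (A i)) d <= findex s (s (A i)) (B i))%N].

Definition traversed k (B : 'I_k.+1 -> D) (d : D) : bool :=
  [exists i, fconnect phi d (s (B i))].

Definition face_on_side k (B : 'I_k.+1 -> D) (lab : pred D) (b : bool)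
    (d : D) : bool :=
  ~~ traversed B d && [forall y, fconnect phi d y ==> (lab y == b)].

Definition edges_on_side (lab : pred D) (b : bool) : nat :=
  fcard a [pred d | lab d == b].

Definition faces_on_side k (B : 'I_k.+1 -> D) (lab : pred D) (b : bool) :=
  fcard phi (face_on_side B lab b).

Definition edge_balanced (al : rat) (lab : pred D) : Prop :=
  forall b, ((edges_on_side lab b)%:R <= al * n_edges%:R)%R.

Definition face_balanced (al : rat) k (B : 'I_k.+1 -> D) (lab : pred D) :
  Prop :=
  forall b, ((faces_on_side B lab b)%:R <= al * n_faces%:R)%R.

End Maps.

From mathcomp Require Import all_boot all_order all_algebra all_fingroup.
From mathcomp Require Import zify.
Set Implicit Arguments. Unset Strict Implicit. Unset Printing Implicit Defensive.

(* Cut the sphere along the noose and keep the darts of one side, adding two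
   new darts at every visited vertex so that the noose becomes a cycle of new
   edges.  In the resulting map the faces strictly on that side survive, each
   traversed face yields a face through a new edge, and the new darts close up
   one more face.  Euler's inequality V + E + F <= #darts + 2 #components for
   this map, with vertices of degree at most 3, gives 3 F_b <= E_b + 3 for the
   F_b faces and E_b edges strictly on side b.  Edge balance 3 E_b <= 2 E and
   Euler's formula 3 F = E + 6 for cubic spherical maps then give
   9 F_b <= 2 E + 9 < 6 F.  The excluded side is the enclosed side of the
   reversed noose. *)

Section PermOrbits.
Variable T : finType.
Implicit Types (p : {perm T}) (e : rel T).

Lemma porbit_fixed p x y : p x = x -> y \in porbit p x -> y = x.
Proof.
move=> px /porbitP[i ->]; elim: i => [|i IH]; first by rewrite expg0 perm1.
by rewrite expgSr permM IH px.
Qed.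

Lemma porbit_closed_sub p (S : {pred T}) x :
  x \in S -> (forall z, z \in S -> p z \in S) -> {subset porbit p x <= S}.
Proof.
move=> xS clS y /porbitP[i ->]; elim: i => [|i IH]; first by rewrite expg0 perm1.
by rewrite expgSr permM; apply: clS.
Qed.

Lemma connect_porbit p e x y :
  (forall z, connect e z (p z)) -> y \in porbit p x -> connect e x y.
Proof.
move=> pe /porbitP[i ->]; elim: i => [|i IH]; first by rewrite expg0 perm1 connect0.
by rewrite expgSr permM; apply: connect_trans IH (pe _).
Qed.

Lemma card_porbits1 : #|porbits (1 : {perm T})| = #|T|.
Proof.
rewrite card_imset // => u v eq_uv.
by apply: porbit_fixed (perm1 v) _; rewrite -eq_uv porbit_id.
Qed.

Lemma card_le_porbits p (W : {set T}) :
  {in W &, forall z1 z2, z2 \in porbit p z1 -> z2 = z1} -> #|W| <= #|porbits p|.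
Proof.
move=> sepW; rewrite -(card_in_imset (f := porbit p)).
  by apply/subset_leq_card/imsetS/subsetP.
by move=> z1 z2 W1 W2 eq12; apply/esym/sepW; rewrite // -eq_porbit_mem eq12.
Qed.

Lemma card_fixed_porbits_le p (W : {set T}) (A : {pred T}) :
  (forall z, z \in W -> p z = z) -> (forall z, z \in A -> z \notin W) ->
  #|W| + #|porbit p @: A| <= #|porbits p|.
Proof.
move=> fixW AW.
have cardW : #|porbit p @: W| = #|W|.
  rewrite card_in_imset // => z1 z2 W1 _ eq12.
  by apply/esym/(porbit_fixed (fixW _ W1)); rewrite eq12 porbit_id.
have disWA : [disjoint porbit p @: W & porbit p @: A].
  apply/pred0P => X /=; apply/negP => /andP[/imsetP[w wW ->] /imsetP[z zA eq_wz]].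
  have zw : z = w by apply: (porbit_fixed (fixW _ wW)); rewrite eq_wz porbit_id.
  by move: (AW _ zA); rewrite zw wW.
have := cardsU (porbit p @: W) (porbit p @: A).
rewrite (disjoint_setI0 disWA) cards0 subn0 cardW => <-.
apply/subset_leq_card/subsetP => X /setUP[] /imsetP[z _ ->]; exact: imset_f.
Qed.

End PermOrbits.

Lemma card_le_mul_card_imset (T U : finType) (A : {pred T}) (f : T -> U) k :
  (forall x, x \in A -> #|[pred y in A | f y == f x]| <= k) ->
  #|A| <= k * #|f @: A|.
Proof.
move=> fibre_le; rewrite -sum1_card (partition_big_imset f) /= mulnC -sum_nat_const.
apply: leq_sum => _ /imsetP[x xA ->].
rewrite sum1dep_card; apply: leq_trans (fibre_le x xA).
by apply/subset_leq_card/subsetP => y; rewrite !inE.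
Qed.

Section EulerInequality.
Variable T : finType.
Implicit Types (s a p : {perm T}) (e : rel T).

Definition map_rel s a : rel T := fun u v => (v == s u) || (v == a u).

Lemma map_rel_sym s a : connect_sym (map_rel s a).
Proof.
have back p x : (forall z, map_rel s a z (p z)) -> connect (map_rel s a) (p x) x.
  move=> step; apply: connect_porbit => [z|]; first exact: connect1.
  by rewrite porbit_sym -{1}(expg1 p) mem_porbit.
have edge_back x y : map_rel s a x y -> connect (map_rel s a) y x.
  by case/orP=> /eqP->; apply: back => z; rewrite /map_rel eqxx ?orbT.
apply: symmetric_from_pre => x y /connectP[q xq ->].
elim: q x xq => [|z q IH] x /=; first by rewrite connect0.
by case/andP=> xz /IH/connect_trans; apply; apply: edge_back.
Qed.

Lemma n_comp_connect_sub e1 e2 : connect_sym e1 -> connect_sym e2 ->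
  subrel (connect e1) (connect e2) -> n_comp e2 T <= n_comp e1 T.
Proof.
move=> sym1 sym2 sub12; rewrite /n_comp_mem.
apply: (leq_trans _ (leq_image_card (fingraph.root e2) (predI (roots e1) (mem T)))).
apply/subset_leq_card/subsetP => r; rewrite !inE andbT => /eqP rr.
apply/imageP; exists (fingraph.root e1 r); first by rewrite !inE (roots_root sym1).
transitivity (fingraph.root e2 r); first by rewrite rr.
by apply/(fingraph.rootP sym2)/sub12/connect_root.
Qed.

Definition add_edge e x y : rel T :=
  fun u v => [|| e u v, (u == x) && (v == y) | (u == y) && (v == x)].

Definition connect_via e x y u v : bool :=
  [|| connect e u v, connect e u x && connect e y v | connect e u y && connect e x v].

Lemma connect_add_edge e x y u v : connect_sym e ->
  connect (add_edge e x y) u v -> connect_via e x y u v.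
Proof.
move=> sym_e /connectP[q uq ->]; elim: q u uq => [|z q IH] u /=.
  by rewrite /connect_via connect0.
rewrite /connect_via in IH *; case/andP=> uz /IH.
set w := last z q.
have pre t : connect e u t -> connect_via e x y t w -> connect_via e x y u w.
  rewrite /connect_via => ut /or3P[h|/andP[h1 h2]|/andP[h1 h2]].
  - by rewrite (connect_trans ut h).
  - by rewrite (connect_trans ut h1) h2 orbT.
  - by rewrite (connect_trans ut h1) h2 !orbT.
case/or3P: uz => [/connect1 h|/andP[/eqP-> /eqP->]|/andP[/eqP-> /eqP->]].
- exact: pre.
- by case/or3P => [h|/andP[_ h]|/andP[_ h]]; rewrite ?connect0 ?h ?orbT.
- by case/or3P => [h|/andP[_ h]|/andP[_ h]]; rewrite ?connect0 ?h ?orbT.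
Qed.

Lemma n_comp_add_edge e1 e2 x y : connect_sym e1 -> connect_sym e2 ->
  subrel (connect e2) (connect (add_edge e1 x y)) ->
  n_comp e1 T <= (n_comp e2 T).+1.
Proof.
move=> sym1 sym2 sub21; rewrite /n_comp_mem (cardD1 (fingraph.root e1 y)).
set R := [predD1 _ & _].
suff: #|R| <= #|predI (roots e2) (mem T)| by case: (_ \in _) => /=; lia.
rewrite -(card_in_image (f := fingraph.root e2)); last first.
  move=> u v; rewrite !inE => /andP[uy /andP[/eqP ru _]] /andP[vy /andP[/eqP rv _]].
  move/(fingraph.rootP sym2)/sub21/(connect_add_edge sym1).
  case/or3P => [/(fingraph.rootP sym1)|/andP[_ /(fingraph.rootP sym1) yv]|/andP[/(fingraph.rootP sym1) uy' _]].
  - by rewrite ru rv.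
  - by rewrite yv rv eqxx in vy.
  - by rewrite -uy' ru eqxx in uy.
apply/subset_leq_card/subsetP => _ /imageP[u _ ->].
by rewrite !inE (roots_root sym2).
Qed.

Lemma porbits_le_n_comp s : #|porbits s| <= n_comp (map_rel s 1) T.
Proof.
have orbit_of u v : connect (map_rel s 1) u v -> v \in porbit s u.
  move/connectP=> [q uq ->]; elim: q u uq => [|z q IH] u /=; first by rewrite porbit_id.
  case/andP=> /orP[/eqP->|/eqP->] /IH; last by rewrite perm1.
  by rewrite -!eq_porbit_mem => /eqP->; have := porbit_perm s 1 u; rewrite expg1 => ->.
rewrite /n_comp_mem.
apply: (leq_trans _ (leq_image_card (porbit s) (predI (roots (map_rel s 1)) (mem T)))).
apply/subset_leq_card/subsetP => _ /imsetP[u _ ->].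
apply/imageP; exists (fingraph.root (map_rel s 1) u); first by rewrite !inE (roots_root (map_rel_sym s 1)).
by apply/eqP; rewrite eq_porbit_mem porbit_sym; apply/orbit_of/connect_root.
Qed.

Lemma n_comp_map_rel_tperm s a x y : a x = x ->
  n_comp (map_rel s a) T <= n_comp (map_rel s (tperm x y * a)) T + (x \notin porbit (a * s) y).
Proof.
move=> ax; set a1 := (tperm x y * a)%g.
have edge_sub : subrel (map_rel s a1) (connect (add_edge (map_rel s a) x y)).
  move=> u v /orP[/eqP->|/eqP->].
    by apply: connect1; rewrite /add_edge /map_rel eqxx.
  rewrite /a1 permM; case: tpermP => [->|->|_ _].
  - apply: (@connect_trans _ _ y); first by apply: connect1; rewrite /add_edge !eqxx orbT.
    by apply: connect1; rewrite /add_edge /map_rel eqxx orbT.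
  - by rewrite ax; apply: connect1; rewrite /add_edge !eqxx !orbT.
  - by apply: connect1; rewrite /add_edge /map_rel eqxx !orbT.
have sub := connect_sub edge_sub.
case: (boolP (x \in porbit (a * s) y)) => [yx | _]; last first.
  by rewrite /= addn1; exact: (n_comp_add_edge (map_rel_sym _ _) (map_rel_sym _ _) sub).
rewrite /= addn0; apply: n_comp_connect_sub (map_rel_sym _ _) (map_rel_sym _ _) _.
have cyx : connect (map_rel s a) y x.
  apply: connect_porbit yx => z; rewrite permM.
  by apply: (@connect_trans _ _ (a z)); apply: connect1; rewrite /map_rel eqxx ?orbT.
move=> u v /sub/(connect_add_edge (map_rel_sym s a)).
case/or3P => [//|/andP[ux yv]|/andP[uy xv]].
- by apply: connect_trans (connect_trans ux _) yv; rewrite map_rel_sym.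
- exact: connect_trans (connect_trans uy cyx) xv.
Qed.

Theorem euler_ineq s a :
  #|porbits s| + #|porbits a| + #|porbits (a * s)| <= #|T| + 2 * n_comp (map_rel s a) T.
Proof.
have [n] := ubnP #|[pred x | a x != x]|; elim: n a => // n IHn a /ltnSE moved_a.
case: (pickP (fun x => a x != x)) => [x ax | a_id]; last first.
  have -> : a = 1%g by apply/permP => z; rewrite perm1; apply/eqP/negbFE/a_id.
  by rewrite mul1g card_porbits1; have := porbits_le_n_comp s; lia.
set y := (a^-1)%g x; set a1 := (tperm x y * a)%g.
have def_a : a = (tperm x y * a1)%g by rewrite /a1 mulgA tperm2 mul1g.
have a1x : a1 x = x by rewrite /a1 permM tpermL /y permKV.
have nxy : x != y by apply: contraNneq ax => exy; rewrite {1}exy /y permKV.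
have moved_a1 : #|[pred z | a1 z != z]| < n.
  rewrite (cardD1 x) !inE ax in moved_a; apply: leq_trans moved_a.
  rewrite ltnS; apply/subset_leq_card/subsetP => z; rewrite !inE /a1 permM.
  have [-> | nzx] := eqVneq z x; first by rewrite tpermL /y permKV eqxx.
  case: tpermP => [->|->|_ _ ->] // _ /=.
  by apply: contraNneq nxy => ayy; rewrite -{1}ayy /y permKV.
have := IHn a1 moved_a1.
have := porbits_mul_tperm a1 x y; rewrite /= -def_a nxy porbit_sym.
rewrite (_ : y \notin porbit a1 x) /=; last first.
  by apply/negP => /(porbit_fixed a1x) eyx; rewrite eyx eqxx in nxy.
have := porbits_mul_tperm (a1 * s) x y; rewrite /= mulgA -def_a nxy.
have := n_comp_map_rel_tperm s y a1x; rewrite -def_a.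
set Cas := #|porbits (a * s)|; set Ca1s := #|porbits (a1 * s)|.
by case: (x \notin _) => /=; lia.
Qed.

End EulerInequality.

Lemma phi_inj (D : finType) (s a : {perm D}) : injective (phi s a).
Proof. by move=> u v /perm_inj /perm_inj. Qed.

Section CubicRotation.
Variables (D : finType) (s : {perm D}).
Hypothesis s_cubic : cubic s.

Lemma iter3_cubic x : iter 3 s x = x.
Proof. by rewrite -{1}(s_cubic x) (iter_order (@perm_inj _ s)). Qed.

Lemma findex_lt3 x d : fconnect s x d -> findex s (s x) d < 3.
Proof.
by move=> xd; rewrite -(s_cubic (s x)) findex_max // -(same_fconnect1 (@perm_inj _ s)).
Qed.

Lemma findex_iter3 x j : j < 3 -> findex s (s x) (iter j s (s x)) = j.
Proof. by move=> j_lt3; rewrite findex_iter // s_cubic. Qed.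

Lemma iter_findex_s x d : fconnect s x d -> iter (findex s (s x) d) s (s x) = d.
Proof. by move=> xd; rewrite iter_findex // -(same_fconnect1 (@perm_inj _ s)). Qed.

Lemma findex_self x : findex s (s x) x = 2.
Proof. by rewrite -{2}(iter3_cubic x) iterSr findex_iter3. Qed.

Lemma findex_arcC x y d : fconnect s x y -> y != x -> fconnect s x d ->
  (findex s (s y) d <= findex s (s y) x) = ~~ (findex s (s x) d <= findex s (s x) y).
Proof.
move=> xy yx xd; have ey := iter_findex_s xy; have ed := iter_findex_s xd.
have f_lt2 : findex s (s x) y < 2.
  have := findex_lt3 xy; rewrite ltnS leq_eqVlt ltnS => /orP[/eqP f2|//].
  by move: yx; rewrite -ey f2 -iterSr iter3_cubic eqxx.
have g_lt3 := findex_lt3 xd.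
move: f_lt2 g_lt3 ey ed; set f := findex s (s x) y; set g := findex s (s x) d.
set u := s x => f_lt2 g_lt3 ey ed.
have pos z k : k < 3 -> iter (k + f.+1) s u = z -> findex s (s y) z = k.
  by move=> k_lt3 <-; rewrite iterD iterS ey findex_iter3.
have -> : findex s (s y) x = 1 - f.
  apply: pos; first lia.
  by rewrite (_ : 1 - f + f.+1 = 2) /u -?iterSr ?iter3_cubic //; lia.
suff [k [k_lt3 ek <-]] : exists k, [/\ k < 3, iter (k + f.+1) s u = d &
    (k <= 1 - f) = ~~ (g <= f)] by rewrite (pos d k).
clear pos ey; move: g_lt3 f_lt2 ed; case: g => [|[|[|g]]] //= _; case: f => [|[|f]] //= _ <-.
- by exists 2; split => //; exact: iter3_cubic.
- by exists 1; split => //; exact: iter3_cubic.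
- by exists 0.
- by exists 2; split => //; rewrite -[2 + 2]/(1 + 3) iterD iter3_cubic.
- by exists 1.
- by exists 0.
Qed.

End CubicRotation.

Section CutMap.
Variables (D : finType) (s a : {perm D}) (n : nat).
Local Notation I := 'I_n.+1.
Variables (P Q : I -> D) (lab : pred D).

Hypothesis a_invol : forall d, a (a d) = d.
Hypothesis s_cubic : cubic s.
Hypothesis sa_connected : connected_map s a.
Hypothesis PQ_noose : noose s a P Q.
Hypothesis PQ_sides : noose_sides s a P Q lab.

Lemma entry_exit_vertex i : fconnect s (P i) (Q i).
Proof. by case: PQ_noose. Qed.

Lemma exit_face i : fconnect (phi s a) (s (Q i)) (s (P (ordS i))).
Proof. by case: PQ_noose. Qed.

Lemma exit_faces_distinct i j : i != j -> ~~ fconnect (phi s a) (s (Q i)) (s (Q j)).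
Proof. by case: PQ_noose => _ _ _; apply. Qed.

Lemma noose_vertex_inj i j d : fconnect s (P i) d -> fconnect s (P j) d -> i = j.
Proof.
move=> Pi_d Pj_d; apply/eqP/negPn/negP; case: PQ_noose => _ Psep _ _ /Psep.
by rewrite (connect_trans Pi_d) // (fconnect_sym (@perm_inj _ s)).
Qed.

Lemma lab_a d : lab (a d) = lab d.
Proof. by case: PQ_sides. Qed.

Lemma lab_s_off_noose d : ~~ on_noose s P d -> lab (s d) = lab d.
Proof. by case: PQ_sides => _ + _; apply. Qed.

Lemma lab_on_noose i d : fconnect s (P i) d ->
  lab d = (findex s (s (P i)) d <= findex s (s (P i)) (Q i)).
Proof. by case: PQ_sides => _ _; apply. Qed.

Definition exit_of d := [pick i | d == Q i].

Lemma exit_of_exit i : exit_of (Q i) = Some i.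
Proof.
rewrite /exit_of; case: pickP => [j /eqP eQ | /(_ i)]; last by rewrite eqxx.
by congr Some; apply: (noose_vertex_inj (entry_exit_vertex j)); rewrite -eQ entry_exit_vertex.
Qed.

Lemma exit_ofP d i : exit_of d = Some i -> d = Q i.
Proof. by rewrite /exit_of; case: pickP => // j /eqP -> [<-]. Qed.

Lemma lab_s_entry i : lab (s (P i)).
Proof. by rewrite (lab_on_noose (fconnect1 _ _)) findex0. Qed.

Lemma lab_s d : lab d -> exit_of d = None -> lab (s d).
Proof.
move=> ld not_exit; case: (boolP (on_noose s P d)) => [/existsP[i Pi_d] | off]; last first.
  by rewrite lab_s_off_noose.
have Pi_sd : fconnect s (P i) (s d) by apply: connect_trans Pi_d (fconnect1 _ _).
have d_pos := iter_findex_s Pi_d; have Q_pos := iter_findex_s (entry_exit_vertex i).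
rewrite (lab_on_noose Pi_d) leq_eqVlt in ld; case/orP: ld => [/eqP eq_pos | lt_pos].
  by move: not_exit; rewrite -d_pos eq_pos Q_pos exit_of_exit.
rewrite (lab_on_noose Pi_sd) -d_pos -iterS findex_iter3 //.
exact: leq_ltn_trans lt_pos (findex_lt3 s_cubic (entry_exit_vertex i)).
Qed.

Lemma lab_neq_entry d i : lab d -> exit_of d = None -> d != P i.
Proof.
move=> ld not_exit; apply/eqP => d_entry; subst d.
have PQ := entry_exit_vertex i; have Q_lt3 := findex_lt3 s_cubic PQ.
have Q2 : findex s (s (P i)) (Q i) = 2.
  by move: ld; rewrite (lab_on_noose (connect0 _ _)) findex_self //; lia.
have QP : Q i = P i by rewrite -(iter_findex_s PQ) Q2 -iterSr iter3_cubic.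
by rewrite -QP exit_of_exit in not_exit.
Qed.

(* The map obtained by cutting along the noose and keeping the side [lab]:
   darts off that side become fixed points, and each visited vertex [i]
   receives two new darts, [out_dart i] after its exit dart [Q i] and
   [in_dart (ord_pred i)] before [s (P i)]; the edge {out_dart i, in_dart i}
   follows the noose from vertex [i] to vertex [ordS i]. *)
Definition cut_dart := (D + (I + I))%type.
Local Notation out_dart i := (inr (inl i) : cut_dart).
Local Notation in_dart i := (inr (inr i) : cut_dart).

Definition cut_rotf (z : cut_dart) : cut_dart :=
  match z with
  | inl d => if lab d then (if exit_of d is Some i then out_dart i else inl (s d))
             else inl d
  | inr (inl i) => in_dart (ord_pred i)
  | inr (inr i) => inl (s (P (ordS i)))
  end.

Definition cut_edgef (z : cut_dart) : cut_dart :=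
  match z with
  | inl d => if lab d then inl (a d) else inl d
  | inr (inl i) => in_dart i
  | inr (inr i) => out_dart i
  end.

Lemma cut_edgefK : involutive cut_edgef.
Proof. by case=> [d|[i|i]] //=; case: ifP => ld /=; rewrite ?lab_a ?ld ?a_invol. Qed.

Lemma cut_rotf_inj : injective cut_rotf.
Proof.
move=> [d1|[i1|i1]] [d2|[i2|i2]] //=.
- case: ifP => l1; case: ifP => l2.
  + case e1: (exit_of d1) => [j1|]; case e2: (exit_of d2) => [j2|] //.
      by case=> ej; rewrite (exit_ofP e1) (exit_ofP e2) ej.
    by case=> /perm_inj ->.
  + by case e1: (exit_of d1) => [j1|] // [ed]; rewrite -ed lab_s in l2.
  + by case e2: (exit_of d2) => [j2|] // [ed]; rewrite ed lab_s in l1.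
  + by case=> ->.
- by case: ifP => _ //; case: (exit_of d1).
- case: ifP => l1; last by case=> ed; rewrite ed lab_s_entry in l1.
  case e1: (exit_of d1) => [j1|] // [/perm_inj ed].
  by move: (lab_neq_entry (ordS i2) l1 e1); rewrite ed eqxx.
- by case: ifP => _ //; case: (exit_of d2).
- move/(congr1 (fun z : cut_dart => if z is inr (inr k) then k else ord0)) => /=.
  by move/ord_pred_inj ->.
- case: ifP => l2; last by case=> ed; rewrite -ed lab_s_entry in l2.
  case e2: (exit_of d2) => [j2|] // [/perm_inj ed].
  by move: (lab_neq_entry (ordS i1) l2 e2); rewrite ed eqxx.
- case=> /perm_inj ed; congr (in_dart _); apply: ordS_inj.
  by apply: (noose_vertex_inj (connect0 _ _)); rewrite ed connect0.
Qed.

Definition cut_rot : {perm cut_dart} := perm cut_rotf_inj.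
Definition cut_edge : {perm cut_dart} := perm (can_inj cut_edgefK).
Definition cut_face : {perm cut_dart} := (cut_edge * cut_rot)%g.

Lemma cut_rotE z : cut_rot z = cut_rotf z. Proof. by rewrite permE. Qed.
Lemma cut_edgeE z : cut_edge z = cut_edgef z. Proof. by rewrite permE. Qed.
Lemma cut_faceE z : cut_face z = cut_rotf (cut_edgef z).
Proof. by rewrite permM cut_rotE cut_edgeE. Qed.

Definition dropped : {set cut_dart} := [set inl d | d in [pred d | ~~ lab d]].

Lemma mem_dropped d : (inl d \in dropped) = ~~ lab d.
Proof. by apply/imsetP/idP => [[d' ld' [->]] // | ld]; exists d. Qed.

Lemma dropped_fixed z : z \in dropped ->
  [/\ cut_rot z = z, cut_edge z = z & cut_face z = z].
Proof.
by case/imsetP => d /negbTE ld ->; rewrite cut_faceE cut_rotE cut_edgeE /= ld /= ld.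
Qed.

Local Notation cut_rel := (map_rel cut_rot cut_edge).

Lemma connect_in_darts i : connect cut_rel (in_dart ord0) (in_dart i).
Proof.
have step j : connect cut_rel (in_dart (ordS j)) (in_dart j).
  apply: (@connect_trans _ _ (out_dart (ordS j))); apply: connect1.
    by rewrite /map_rel cut_edgeE /= eqxx orbT.
  by rewrite /map_rel cut_rotE /= ordSK eqxx.
suff reach j : j < n.+1 -> connect cut_rel (in_dart ord0) (in_dart (inord j)).
  by rewrite -(inord_val i); apply: reach.
elim: j => [|j IH] j_lt.
  by rewrite (_ : inord 0 = ord0) //; apply: val_inj; rewrite /= inordK.
apply: connect_trans (IH (ltnW j_lt)) _; rewrite map_rel_sym.
rewrite (_ : inord j.+1 = ordS (inord j)) //.
by apply: val_inj; rewrite /= !inordK ?modn_small // ltnW.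
Qed.

Lemma connect_out_darts i : connect cut_rel (in_dart ord0) (out_dart i).
Proof.
apply: connect_trans (connect_in_darts i) (connect1 _).
by rewrite /map_rel cut_edgeE /= eqxx orbT.
Qed.

Lemma connect_side_arc i j : j <= findex s (s (P i)) (Q i) ->
  connect cut_rel (in_dart ord0) (inl (iter j s (s (P i)))).
Proof.
have P_iter k : fconnect s (P i) (iter k s (s (P i))).
  by rewrite (same_fconnect1 (@perm_inj _ s)) fconnect_iter.
have Q_lt3 := findex_lt3 s_cubic (entry_exit_vertex i).
elim: j => [|j IH] j_le.
  apply: connect_trans (connect_in_darts (ord_pred i)) (connect1 _).
  by rewrite /map_rel cut_rotE /= ord_predK eqxx.
apply: connect_trans (IH (ltnW j_le)) (connect1 _).
rewrite /map_rel cut_rotE /= (lab_on_noose (P_iter j)) findex_iter3 ?(ltnW j_le) //; last first.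
  exact: ltn_trans j_le Q_lt3.
case e: (exit_of _) => [k|]; last by rewrite eqxx.
have eQ := exit_ofP e; have ki : k = i.
  by apply: (noose_vertex_inj (entry_exit_vertex k)); move: (P_iter j); rewrite eQ.
subst k; have j_lt3 := ltn_trans j_le Q_lt3.
by move: j_le; rewrite -eQ findex_iter3 ?ltnn.
Qed.

Lemma connect_side_vertex d i : fconnect s (P i) d -> lab d ->
  connect cut_rel (in_dart ord0) (inl d).
Proof.
move=> Pi_d; rewrite (lab_on_noose Pi_d) -{2}(iter_findex_s Pi_d).
exact: connect_side_arc.
Qed.

Lemma connect_side d : lab d -> connect cut_rel (in_dart ord0) (inl d).
Proof.
move=> ld; case/connectP: (sa_connected d (P ord0)) => q dq last_q.
elim: q d ld dq last_q => [|z q IH] d ld /=.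
  by move=> _ dP; apply: (@connect_side_vertex d ord0); rewrite // dP connect0.
case/andP => dz zq last_q.
case: (boolP (on_noose s P d)) => [/existsP[i Pi_d] | off].
  exact: connect_side_vertex Pi_d ld.
have not_exit : exit_of d = None.
  case e: (exit_of d) => [k|] //; move/existsP: off; case.
  by exists k; rewrite (exit_ofP e) entry_exit_vertex.
have lz : lab z by case/orP: dz => /eqP ->; rewrite ?lab_s_off_noose ?lab_a.
apply: connect_trans (IH z lz zq last_q) _; rewrite map_rel_sym; apply: connect1.
by case/orP: dz => /eqP ->; rewrite /map_rel cut_rotE cut_edgeE /= ld ?not_exit eqxx ?orbT.
Qed.

Lemma n_comp_cut_map : n_comp cut_rel {: cut_dart} <= #|dropped| + 1.
Proof.
have reach z : z \notin dropped -> connect cut_rel (in_dart ord0) z.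
  case: z => [d|[i|i]] zd; [|exact: connect_out_darts|exact: connect_in_darts].
  by apply: connect_side; rewrite mem_dropped negbK in zd.
rewrite /n_comp_mem addn1.
apply: leq_trans (_ : #|fingraph.root cut_rel (in_dart ord0) |: dropped| <= _); last first.
  by rewrite cardsU1; case: (_ \notin _).
apply/subset_leq_card/subsetP => r; rewrite inE /= andbT => /eqP rr.
rewrite in_setU1; apply/orP; case: (boolP (r \in dropped)) => rd; [by right | left].
rewrite -rr; apply/eqP/(fingraph.rootP (map_rel_sym _ _)).
by rewrite map_rel_sym; apply: reach.
Qed.

Definition kept : {set cut_dart} := [set inl d | d in [pred d | lab d]].

Definition vertex_region d0 : {pred cut_dart} := [pred z |
  match z with
  | inl d => fconnect s d0 d
  | inr (inl i) => fconnect s (P i) d0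
  | inr (inr i) => fconnect s (P (ordS i)) d0
  end].

Lemma vertex_region_closed d0 z : z \in vertex_region d0 -> cut_rot z \in vertex_region d0.
Proof.
have s_sym := fconnect_sym (@perm_inj _ s).
rewrite !inE cut_rotE; case: z => [d|[i|i]] /=.
- case: ifP => // ld; case e: (exit_of d) => [k|] /=; last first.
    by move=> d0d; apply: connect_trans d0d (fconnect1 _ _).
  by rewrite s_sym (exit_ofP e) => Qk_d0; apply: connect_trans (entry_exit_vertex k) Qk_d0.
- by rewrite ord_predK.
- by rewrite s_sym => d0_P; apply: connect_trans d0_P (fconnect1 _ _).
Qed.

Lemma card_side_le_vertices : #|[pred d | lab d]| <= 3 * #|porbit cut_rot @: kept|.
Proof.
have card_kept : #|kept| = #|[pred d | lab d]| by rewrite card_imset //; exact: inl_inj.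
rewrite -card_kept; apply: card_le_mul_card_imset => _ /imsetP[d0 _ ->].
have sub : {subset porbit cut_rot (inl d0) <= vertex_region d0}.
  by apply: porbit_closed_sub; [exact: connect0 | exact: vertex_region_closed].
rewrite -(s_cubic d0) /fingraph.order.
apply: leq_trans (leq_imset_card inl (fconnect s d0)).
apply/subset_leq_card/subsetP => z; rewrite !inE => /andP[/imsetP[d _ ->] /eqP eq_orb].
by apply: imset_f; apply: (sub (inl d)); rewrite -eq_orb porbit_id.
Qed.

Lemma card_dropped_vertices_le :
  #|dropped| + #|porbit cut_rot @: kept| <= #|porbits cut_rot|.
Proof.
apply: card_fixed_porbits_le => [z /dropped_fixed[] //|_ /imsetP[d ld ->]].
by rewrite mem_dropped negbK.
Qed.

Lemma card_kept_le_edges : #|~: dropped| <= 2 * #|porbit cut_edge @: ~: dropped|.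
Proof.
apply: card_le_mul_card_imset => z _.
have sub : {subset porbit cut_edge z <= [set z; cut_edge z]}.
  apply: porbit_closed_sub; first by rewrite !inE eqxx.
  by move=> _ /set2P[] ->; rewrite !inE ?cut_edgeE ?cut_edgefK eqxx ?orbT.
apply: leq_trans (_ : #|[set z; cut_edge z]| <= 2); last first.
  by rewrite cards2; case: (_ != _).
apply/subset_leq_card/subsetP => w; rewrite !inE => /andP[_ /eqP eq_orb].
by have := sub w; rewrite -eq_orb porbit_id !inE => /(_ isT).
Qed.

Lemma card_dropped_edges_le :
  #|dropped| + #|porbit cut_edge @: ~: dropped| <= #|porbits cut_edge|.
Proof.
apply: card_fixed_porbits_le => [z /dropped_fixed[] //|z].
by rewrite inE.
Qed.

Definition side_face_reps : {set cut_dart} :=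
  [set inl r | r in [pred r | (r \in froots (phi s a)) && face_on_side s a Q lab true r]].

Definition face_reps : {set cut_dart} :=
  side_face_reps :|: [set out_dart i | i in I] :|: [set in_dart ord0] :|: dropped.

Definition face_region r : {pred cut_dart} :=
  [pred z | if z is inl d then fconnect (phi s a) r d else false].

Definition traversed_region i : {pred cut_dart} := [pred z |
  match z with
  | inl d => fconnect (phi s a) (s (Q i)) d
  | inr (inl j) => j == i
  | inr (inr _) => false
  end].

Definition outer_region : {pred cut_dart} := [pred z | if z is inr (inr _) then true else false].

Lemma porbit_side_face r : face_on_side s a Q lab true r ->
  {subset porbit cut_face (inl r) <= face_region r}.
Proof.
case/andP=> not_trav /forallP on_side; apply: porbit_closed_sub; first exact: connect0.
case=> [d|//]; rewrite !inE cut_faceE /= => rd.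
have ld : lab d by have := on_side d; rewrite rd eqb_id.
rewrite ld /= lab_a ld; case e: (exit_of (a d)) => [k|] /=.
  case/negP: not_trav; apply/existsP; exists k; rewrite -(exit_ofP e).
  exact: connect_trans rd (fconnect1 _ _).
exact: connect_trans rd (fconnect1 _ _).
Qed.

Lemma porbit_out_dart i : {subset porbit cut_face (out_dart i) <= traversed_region i}.
Proof.
apply: porbit_closed_sub; first by rewrite inE /=.
case=> [d|[j|j]] //; rewrite !inE cut_faceE /=; last by move/eqP->; apply: exit_face.
move=> Qi_d; case: ifP => ld /=; last by rewrite ld.
rewrite lab_a ld; case e: (exit_of (a d)) => [k|] /=; last first.
  exact: connect_trans Qi_d (fconnect1 _ _).
have [//|ki] := eqVneq k i; rewrite eq_sym in ki.
case/negP: (exit_faces_distinct ki); rewrite -(exit_ofP e).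
exact: connect_trans Qi_d (fconnect1 _ _).
Qed.

Lemma porbit_in_dart0 : {subset porbit cut_face (in_dart ord0) <= outer_region}.
Proof. by apply: porbit_closed_sub => // [[d|[j|j]]] //; rewrite !inE cut_faceE. Qed.

Lemma face_reps_sep :
  {in face_reps &, forall z1 z2, z2 \in porbit cut_face z1 -> z2 = z1}.
Proof.
move=> z1 z2 W1 W2 z12.
case: (boolP (z2 \in dropped)) => [/dropped_fixed[_ _ f2] | d2].
  by apply/esym/(porbit_fixed f2); rewrite porbit_sym.
case: (boolP (z1 \in dropped)) => [/dropped_fixed[_ _ f1] | d1].
  exact: porbit_fixed f1 z12.
move: W1 W2; rewrite !in_setU (negbTE d1) (negbTE d2) !orbF => W1 W2.
have sym_phi := fconnect_sym (@phi_inj _ s a).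
case/orP: W1 => [/orP[]|].
- case/imsetP=> r; rewrite inE => /andP[/eqP root_r side_r] e1; subst z1.
  have := porbit_side_face side_r z12; case/orP: W2 => [/orP[]|].
  + case/imsetP=> r'; rewrite inE => /andP[/eqP root_r' _] -> /= rr'.
    by rewrite -root_r -root_r'; congr inl; apply/esym/(fingraph.rootP sym_phi).
  + by case/imsetP=> j _ ->.
  + by rewrite inE => /eqP ->.
- case/imsetP=> i _ e1; subst z1.
  have := porbit_out_dart z12; case/orP: W2 => [/orP[]|].
  + case/imsetP=> r; rewrite inE => /andP[_ /andP[not_trav _]] -> /= Qi_r.
    by case/negP: not_trav; apply/existsP; exists i; rewrite sym_phi.
  + by case/imsetP=> j _ -> /= /eqP ->.
  + by rewrite inE => /eqP ->.
- rewrite inE => /eqP e1; subst z1.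
  have := porbit_in_dart0 z12; case/orP: W2 => [/orP[]|].
  + by case/imsetP=> r _ ->.
  + by case/imsetP=> j _ ->.
  + by rewrite inE => /eqP.
Qed.

Lemma card_face_reps :
  #|face_reps| = fcard (phi s a) (face_on_side s a Q lab true) + n.+1 + 1 + #|dropped|.
Proof.
have cardU (A B : {set cut_dart}) : [disjoint A & B] -> #|A :|: B| = #|A| + #|B|.
  by move=> disAB; rewrite cardsU (disjoint_setI0 disAB) cards0 subn0.
rewrite /face_reps !cardU.
- rewrite cards1 card_imset ?card_ord; last by move=> u v [].
  rewrite card_imset; last by move=> u v [].
  by rewrite card_ord; congr (_ + _ + _ + _); apply: eq_card => r; rewrite !inE.
- apply/pred0P => z /=; apply/negP => /andP[].
  by case/imsetP => ? _ ->; case/imsetP.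
- apply/pred0P => z /=; apply/negP => /andP[].
  by rewrite in_setU => /orP[]; case/imsetP => ? _ ->; rewrite in_set1.
- apply/pred0P => z /=; apply/negP => /andP[].
  rewrite !in_setU in_set1 => /orP[/orP[]|].
  + case/imsetP => r; rewrite inE => /andP[_ /andP[_ /forallP /(_ r)]].
    by rewrite connect0 eqb_id /= => lr ->; rewrite mem_dropped lr.
  + by case/imsetP => i _ ->; case/imsetP.
  + by move/eqP->; case/imsetP.
Qed.

Theorem faces_on_side_le : 6 * faces_on_side s a Q lab true <= #|[pred d | lab d]| + 6.
Proof.
have euler := euler_ineq cut_rot cut_edge; rewrite -/cut_face in euler.
have faces := card_le_porbits face_reps_sep; rewrite card_face_reps in faces.
have vertices := card_dropped_vertices_le; have vertex_deg := card_side_le_vertices.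
have edges := card_dropped_edges_le; have edge_deg := card_kept_le_edges.
have comps := n_comp_cut_map.
have card_kept : #|~: dropped| + #|dropped| = #|{: cut_dart}|.
  by rewrite cardsCs setCK subnK // max_card.
have card_cut : #|{: cut_dart}| = #|D| + (n.+1 + n.+1) by rewrite !card_sum !card_ord.
have card_dropped : #|dropped| = #|[pred d | ~~ lab d]| by rewrite card_imset //; exact: inl_inj.
have card_D : #|[pred d | lab d]| + #|[pred d | ~~ lab d]| = #|D|.
  by rewrite -(cardC [pred d | lab d]); congr (_ + _); apply: eq_card.
rewrite /faces_on_side.
set C := #|{: cut_dart}| in card_kept card_cut euler.
set Cc := n_comp cut_rel _ in euler comps.
lia.
Qed.

End CutMap.

Lemma rev_ord_ordS n (i : 'I_n.+1) : rev_ord (ordS i) = ord_pred (rev_ord i).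
Proof.
apply: val_inj => /=; have i_lt := ltn_ord i.
have [i_ltn | ->] : i < n \/ i = n :> nat by lia.
  rewrite modn_small // (_ : (n - i + n.+1).-1 = (n - i).-1 + n.+1) ?modnDr ?modn_small; lia.
by rewrite modnn subnn add0n /= modn_small // subn1.
Qed.

Section ReversedNoose.
Variables (D : finType) (s a : {perm D}) (k : nat).
Variables (A B : 'I_k.+1 -> D) (lab : pred D).
Hypothesis AB_noose : noose s a A B.

Definition rev_entry i := B (rev_ord i).
Definition rev_exit i := A (rev_ord i).

Lemma traversed_entries d :
  traversed s a B d = [exists i, fconnect (phi s a) d (s (A i))].
Proof.
case: AB_noose => _ _ faceBA _.
apply/existsP/existsP => [[i dB] | [i dA]].
  by exists (ordS i); apply: connect_trans dB (faceBA i).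
exists (ord_pred i); apply: connect_trans dA _.
by rewrite (fconnect_sym (@phi_inj _ s a)) -{2}(ord_predK i).
Qed.

Lemma rev_noose : noose s a rev_entry rev_exit.
Proof.
have s_sym := fconnect_sym (@perm_inj _ s); have phi_sym := fconnect_sym (@phi_inj _ s a).
case: AB_noose => AB A_sep faceBA B_sep; split=> [i|i j ij|i|i j ij].
- by rewrite /rev_entry /rev_exit s_sym.
- have r_ij : rev_ord i != rev_ord j by apply: contra ij => /eqP/rev_ord_inj ->.
  apply: contra (A_sep _ _ r_ij) => Bi_Bj.
  by apply: connect_trans (AB _) (connect_trans Bi_Bj _); rewrite s_sym.
- by rewrite /rev_entry /rev_exit rev_ord_ordS phi_sym; have := faceBA (ord_pred (rev_ord i)); rewrite ord_predK.
- rewrite /rev_exit -(ord_predK (rev_ord i)) -(ord_predK (rev_ord j)).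
  have r_ij : ord_pred (rev_ord i) != ord_pred (rev_ord j).
    by apply: contra ij => /eqP/ord_pred_inj/rev_ord_inj ->.
  apply: contra (B_sep _ _ r_ij) => Ai_Aj.
  apply: connect_trans (faceBA _) (connect_trans Ai_Aj _).
  by rewrite phi_sym faceBA.
Qed.

Lemma faces_on_side_rev :
  faces_on_side s a rev_exit [pred d | ~~ lab d] true = faces_on_side s a B lab false.
Proof.
apply: eq_n_comp_r => d; rewrite !unfold_in /face_on_side traversed_entries.
congr (~~ _ && _); last by apply: eq_forallb => y; rewrite !inE eqb_id eqbF_neg.
apply/existsP/existsP => [[i dA] | [i dA]]; first by exists (rev_ord i).
by exists (rev_ord i); rewrite /rev_exit rev_ordK.
Qed.

Hypothesis s_cubic : cubic s.
Hypothesis AB_sides : noose_sides s a A B lab.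
Hypothesis exit_neq_entry : forall i, B i != A i.

Lemma rev_noose_sides : noose_sides s a rev_entry rev_exit [pred d | ~~ lab d].
Proof.
have s_sym := fconnect_sym (@perm_inj _ s).
case: AB_noose AB_sides => AB _ _ _ [lab_a lab_s lab_on]; split=> [d|d|i d].
- by rewrite !inE lab_a.
- move=> off; rewrite !inE lab_s //; apply: contra off => /existsP[i Ai_d].
  apply/existsP; exists (rev_ord i); rewrite /rev_entry rev_ordK.
  by apply: connect_trans Ai_d; rewrite s_sym.
- rewrite /rev_entry /rev_exit inE => Bd; have Ad := connect_trans (AB _) Bd.
  by rewrite (findex_arcC s_cubic (AB _) (exit_neq_entry _) Ad) -lab_on.
Qed.

End ReversedNoose.

Lemma ler_nat_two_thirds (R : numFieldType) (x y : nat) :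
  ((x%:R : R) <= 2%:R / 3%:R * y%:R)%R = (3 * x <= 2 * y).
Proof.
rewrite GRing.mulrAC Num.Theory.ler_pdivlMr ?Num.Theory.ltr0n //.
by rewrite -!GRing.natrM Num.Theory.ler_nat mulnC.
Qed.

Section Counting.
Variables (D : finType) (s a : {perm D}).

Lemma fcard_multigraph (S : {pred D}) :
  multigraph_map a -> fclosed a S -> fcard a S * 2 = #|S|.
Proof.
case=> a_invol a_fpf clS; apply: (fcard_order_set (@perm_inj _ a) _ clS).
apply/subsetP => d _; rewrite inE; apply/eqP.
have cyc : fcycle a [:: d; a d] by rewrite /= !eqxx a_invol eqxx.
by rewrite (order_cycle cyc) ?inE ?eqxx //= inE eq_sym a_fpf.
Qed.

Lemma fcard_cubic : cubic s -> n_vertices s * 3 = #|D|.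
Proof.
move=> s_cubic; apply: (fcard_order_set (@perm_inj _ s)) => //.
by apply/subsetP => d _; rewrite inE s_cubic.
Qed.

Lemma edges_on_side_double (lab : pred D) b : multigraph_map a ->
  (forall d, lab (a d) = lab d) -> edges_on_side a lab b * 2 = #|[pred d | lab d == b]|.
Proof. by move=> mg lab_a; apply: fcard_multigraph => // x _ /eqP <-; rewrite !inE lab_a. Qed.

End Counting.

Lemma face_balanced_of_side_bounds (D : finType) (s a : {perm D}) k
    (B : 'I_k.+1 -> D) (lab : pred D) :
  multigraph_map a -> cubic s -> spherical s a -> (forall d, lab (a d) = lab d) ->
  edge_balanced a (2%:R / 3%:R)%R lab ->
  6 * faces_on_side s a B lab true <= #|[pred d | lab d]| + 6 ->
  6 * faces_on_side s a B lab false <= #|[pred d | ~~ lab d]| + 6 ->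
  face_balanced s a (2%:R / 3%:R)%R B lab.
Proof.
move=> mg s_cubic euler lab_a bal F_true F_false b.
have E2 : n_edges a * 2 = #|D| by apply: fcard_multigraph.
have V3 := fcard_cubic s_cubic.
have Eb := edges_on_side_double b mg lab_a.
have := bal b; rewrite !ler_nat_two_thirds /spherical in euler *.
have card_side : #|[pred d | lab d == b]| =
    if b then #|[pred d | lab d]| else #|[pred d | ~~ lab d]|.
  by case: b {Eb}; apply: eq_card => d; rewrite !inE ?eqb_id ?eqbF_neg.
by rewrite card_side in Eb; case: b Eb {card_side} => /=; lia.
Qed.

Lemma noose_exit_neq_entry (D : finType) (s a : {perm D}) k
    (A B : 'I_k.+1 -> D) (lab : pred D) i :
  multigraph_map a -> cubic s -> connected_map s a ->
  noose s a A B -> noose_sides s a A B lab ->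
  3 * edges_on_side a lab true <= 2 * n_edges a -> B i != A i.
Proof.
move=> mg s_cubic conn [_ _ faceBA B_sep] [lab_a lab_s lab_on] bal; apply/eqP => BA.
have pred_i : ord_pred i = i.
  apply/eqP/negPn/negP => /B_sep; rewrite BA -{2}(ord_predK i).
  by rewrite faceBA.
have single j : j = i.
  have /(congr1 val) /= : ordS i = i by rewrite -{1}pred_i ord_predK.
  have := ltn_ord i; have := ltn_ord j.
  case: (ltngtP i k) => [ik|ki|ik]; [by rewrite modn_small //; lia | lia |].
  by rewrite ik modnn => jk _ k0; apply: ord_inj; lia.
have at_i d : fconnect s (A i) d -> lab d.
  move=> Ad; rewrite (lab_on _ _ Ad) BA findex_self //.
  by rewrite -ltnS (findex_lt3 s_cubic Ad).
have all_lab d : lab d.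
  case/connectP: (conn (A i) d) => q Aq ->.
  elim: q (A i) Aq (at_i _ (connect0 _ _)) => [|z q IH] x //= /andP[xz zq] lx.
  apply: IH zq _; case/orP: xz => /eqP ->; last by rewrite lab_a.
  case: (boolP (on_noose s A x)) => [/existsP[j Aj_x] | off]; last by rewrite lab_s.
  by apply: at_i; rewrite -(single j); apply: connect_trans Aj_x (fconnect1 _ _).
have all_edges : edges_on_side a lab true = n_edges a.
  by apply: eq_n_comp_r => d; rewrite !inE all_lab.
have E2 : n_edges a * 2 = #|D| by apply: fcard_multigraph.
have D0 : #|D| = 0 by rewrite all_edges in bal; lia.
by have := card0_eq D0 (A i); rewrite !inE.
Qed.

Unset Implicit Arguments. Set Strict Implicit. Set Printing Implicit Defensive.

Theorem lemma4p16 (D : finType) (s a : {perm D}) (k : nat)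
    (A B : 'I_k.+1 -> D) (lab : pred D) :
  multigraph_map a -> cubic s -> connected_map s a -> spherical s a ->
  noose s a A B -> noose_sides s a A B lab ->
  edge_balanced a (2%:R / 3%:R)%R lab ->
  face_balanced s a (2%:R / 3%:R)%R B lab.
Proof.
move=> mg s_cubic conn euler AB_noose AB_sides bal.
have [a_invol _] := mg; have [lab_a _ _] := AB_sides.
have bal_true : 3 * edges_on_side a lab true <= 2 * n_edges a.
  by rewrite -(ler_nat_two_thirds rat); exact: bal.
have exit_neq i := noose_exit_neq_entry i mg s_cubic conn AB_noose AB_sides bal_true.
apply: face_balanced_of_side_bounds => //.
  exact: faces_on_side_le a_invol s_cubic conn AB_noose AB_sides.
rewrite -(faces_on_side_rev lab AB_noose).
apply: (faces_on_side_le a_invol s_cubic conn (rev_noose AB_noose)).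
exact: rev_noose_sides AB_noose s_cubic AB_sides exit_neq.
Qed.
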